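(* Let $\mathcal T$ be an admissible labeled tree. Then $\Delta(\mathcal T)=0$ if and only if the root's label appears on no other vertex, and every other label appears on exactly two vertices $v,v'$, which lie at the same distance from the root and whose parents carry the same label. In that case the edges $(p(v),v)$ and $(p(v'),v')$ are paired row by row, giving a perfect pairing of the edges between each pair of consecutive levels.
   Context: Setting: $T$ is a finite rooted tree with levels (root at level $t$, children of a level-$s$ vertex at level $s-1$); $p(v)$ denotes the parent of $v$. A labeling gives each vertex $v$ a label $\ell(v)\in[N]$. The labeled tree $\mathcal T$ is admissible if (i) whenever $u$ is the parent of $v$ and $v$ the parent of $w$, $\ell(u)\ne\ell(w)$; (ii) for every edge $\{u,v\}$ there is another edge $\{u',v'\}$ with $\{\ell(u'),\ell(v')\}=\{\ell(u),\ell(v)\}$. $|V(\mathcal T)|$ is the number of distinct labels used (including the root's), $|E(\mathcal T)|$ the number of edges, and $\Delta(\mathcal T)=\tfrac12|E(\mathcal T)|-|V(\mathcal T)|+1$. *)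

From HB Require Import structures.
From mathcomp Require Import all_boot all_order all_algebra.
Set Implicit Arguments. Unset Strict Implicit. Unset Printing Implicit Defensive.
Import GRing.Theory Num.Theory.

(* The edges are {par v, v} for v <> root.  The level of the paper is
   t - depth v, so "same level" = "same distance from the root" = same depth. *)
Definition rooted_tree (T : finType) (root : T) (par : T -> T) (depth : T -> nat) :=
  depth root = 0%N /\ forall v, v != root -> depth v = (depth (par v)).+1.

Section Labeled.
Variables (T : finType) (N : nat) (root : T) (par : T -> T) (lab : T -> 'I_N).

Definition adm_i :=
  forall w, w != root -> par w != root -> lab (par (par w)) != lab w.

Definition adm_ii :=
  forall v, v != root -> exists2 w, (w != root) && (w != v) &
    [set lab (par w); lab w] = [set lab (par v); lab v].

Definition admissible := adm_i /\ adm_ii.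

Definition nV : nat := #|[set lab v | v in T]|.
Definition nE : nat := #|[set v : T | v != root]|.

Definition Delta : rat := ((nE%:R / 2%:R) - nV%:R + 1)%R.
End Labeled.

From mathcomp Require Import all_boot all_order all_algebra.
From mathcomp Require Import zify lra.
Set Implicit Arguments. Unset Strict Implicit. Unset Printing Implicit Defensive.
Import GRing.Theory Num.Theory.

(* For each label l other than the root's, let u(l) be a shallowest vertex
   labelled l and l' the label of its parent.  Label l' first appears strictly
   higher than l, so l |-> {l', l} is injective; by (ii) every label pair that
   occurs on an edge occurs on at least two edges.  Hence |E| >= 2 (|V| - 1),
   i.e. Delta >= 0, with equality iff the edge label pairs are exactly the pairs
   {l', l} and each occurs on exactly two edges.  In that case (i) forces every
   edge to run from l' down to l, so by induction from the root each vertex sits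
   at the depth where its label first appears and its parent carries l'; the
   label classes are then the edge classes.  The converse is a count of |E| by
   labels. *)

Lemma set2_eq (T : finType) (a b c d : T) :
  [set a; b] = [set c; d] -> (a = c /\ b = d) \/ (a = d /\ b = c).
Proof.
move=> e.
have /set2P[ac|ad] : a \in [set c; d] by rewrite -e set21.
  have /set2P[bc|bd] : b \in [set c; d] by rewrite -e set22.
    have : d \in [set a; b] by rewrite e set22.
    by rewrite ac bc setUid => /set1P ->; left.
  by left.
have /set2P[bc|bd] : b \in [set c; d] by rewrite -e set22.
  by right.
have : c \in [set a; b] by rewrite e set21.
by rewrite ad bd setUid => /set1P ->; left.
Qed.

Lemma leqif_double_card_imset (aT rT : finType) (f : aT -> rT) (A : {set aT}) :
    {in A, forall a, 2 <= #|[set x in A | f x == f a]|} ->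
  #|f @: A| * 2 <= #|A| ?= iff [forall a in A, #|[set x in A | f x == f a]| == 2].
Proof.
move=> fiber_ge2.
have -> : #|A| = \sum_(p in f @: A) #|[set x in A | f x == p]|.
  rewrite -sum1_card (partition_big f (mem (f @: A))) => [|a Aa]; last exact: imset_f.
  by apply: eq_bigr => p _; rewrite -sum1_card; apply: eq_bigl => a; rewrite inE.
rewrite -sum_nat_const.
set C := [forall a in A, _].
have -> : C = [forall (p | p \in f @: A), 2 == #|[set x in A | f x == p]|].
  apply/forall_inP/forall_inP => [h _ /imsetP[a Aa ->] | h a Aa].
    by rewrite eq_sym h.
  by rewrite eq_sym h ?imset_f.
apply: leqif_sum => _ /imsetP[a Aa ->]; exact/leqif_eq/fiber_ge2.
Qed.

Section Partner.

Variables (T : finType) (rT : eqType) (f : T -> rT).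

Definition partner (v : T) : T := odflt v [pick w | (w != v) && (f w == f v)].

Lemma partner_eq v : f (partner v) = f v.
Proof. by rewrite /partner; case: pickP => [w /andP[_ /eqP] | ]. Qed.

Lemma partnerP v : #|[set w | f w == f v]| = 2 ->
  partner v != v /\ [set w | f w == f v] = [set v; partner v].
Proof.
move=> card_class; have v_class : v \in [set w | f w == f v] by rewrite inE.
have /cards1P[w class_w] : #|[set w | f w == f v] :\ v| == 1.
  by move: card_class; rewrite (cardsD1 v) v_class add1n => -[->].
have w_class : w \in [set w | f w == f v] :\ v by rewrite class_w set11.
have -> : partner v = w.
  rewrite /partner; case: pickP => [u u_class | none] /=.
    by apply/set1P; rewrite -class_w !inE.
  by move: w_class; rewrite !inE none.
by rewrite -(setD1K v_class) class_w; move: w_class; rewrite !inE => /andP[].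
Qed.

Lemma partnerK v : #|[set w | f w == f v]| = 2 -> partner (partner v) = v.
Proof.
move=> card_class; have [pv_v class_v] := partnerP card_class.
have card_pv : #|[set w | f w == f (partner v)]| = 2 by rewrite partner_eq.
have [ppv_pv] := partnerP card_pv; rewrite partner_eq => class_pv.
have := set22 (partner v) (partner (partner v)); rewrite -class_pv // class_v.
by case/set2P => // ppv_eq; rewrite ppv_eq eqxx in ppv_pv.
Qed.

End Partner.

Section AdmissibleTree.

Variables (T : finType) (N : nat) (root : T) (par : T -> T) (depth : T -> nat).
Variable lab : T -> 'I_N.
Hypothesis tree : rooted_tree root par depth.
Hypothesis adm : admissible root par lab.

Definition edges : {set T} := [set v | v != root].

Definition nonroot_labels : {set 'I_N} := [set lab v | v in T] :\ lab root.

Definition edge_labels (v : T) : {set 'I_N} := [set lab (par v); lab v].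

(* Defaults to [root] when no vertex carries [l]. *)
Definition first_vertex (l : 'I_N) : T :=
  if [pick v | lab v == l] is Some v0 then [arg min_(v < v0 | lab v == l) depth v]
  else root.

Definition label_depth (l : 'I_N) : nat := depth (first_vertex l).

Definition pred_label (l : 'I_N) : 'I_N := lab (par (first_vertex l)).

Definition label_pair (l : 'I_N) : {set 'I_N} := [set pred_label l; l].

Lemma tree_ind (P : T -> Prop) :
  P root -> (forall v, v != root -> P (par v) -> P v) -> forall v, P v.
Proof.
case: tree => depth_root depth_par P_root P_par v.
elim: {v}(depth v) {-2}v (erefl (depth v)) => [|n IH] v depth_v.
  case: (eqVneq v root) => [-> //|v_nonroot].
  by move: depth_v; rewrite depth_par.
have v_nonroot : v != root by apply: contra_eq_neq depth_v => ->; rewrite depth_root.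
by apply: P_par => //; apply: IH; move: depth_v; rewrite depth_par // => -[].
Qed.

Lemma lab_first_vertex v : lab (first_vertex (lab v)) = lab v.
Proof.
rewrite /first_vertex; case: pickP => [v0 lab_v0 | none].
  by case: arg_minnP => // u /eqP.
by have := none v; rewrite eqxx.
Qed.

Lemma label_depth_min v : label_depth (lab v) <= depth v.
Proof.
rewrite /label_depth /first_vertex.
case: pickP => [v0 lab_v0 | none]; last by have := none v; rewrite eqxx.
by case: arg_minnP => // u _; apply.
Qed.

Lemma label_depth_root : label_depth (lab root) = 0.
Proof. by apply/eqP; rewrite -leqn0 -tree.1 label_depth_min. Qed.

Lemma first_vertex_nonroot l : l \in nonroot_labels -> first_vertex l != root.
Proof.
case/setD1P => l_nonroot /imsetP[u _ l_u]; rewrite l_u in l_nonroot *.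
by apply: contra_neq l_nonroot => first_root; rewrite -(lab_first_vertex u) first_root.
Qed.

Lemma label_depth_pred_lt l :
  l \in nonroot_labels -> label_depth (pred_label l) < label_depth l.
Proof.
move=> /first_vertex_nonroot first_nonroot.
by rewrite {2}/label_depth tree.2 // ltnS label_depth_min.
Qed.

Lemma label_pair_inj : {in nonroot_labels &, injective label_pair}.
Proof.
move=> l l' Ll Ll' /set2_eq[[_ //] | [pred_l pred_l']].
have := label_depth_pred_lt Ll; have := label_depth_pred_lt Ll'.
rewrite pred_l pred_l'; lia.
Qed.

Lemma edge_labels_first_vertex l :
  l \in nonroot_labels -> edge_labels (first_vertex l) = label_pair l.
Proof.
by case/setD1P => _ /imsetP[u _ ->]; rewrite /edge_labels lab_first_vertex.
Qed.

Lemma two_le_card_edge_class v :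
  v \in edges -> 2 <= #|[set w in edges | edge_labels w == edge_labels v]|.
Proof.
rewrite inE => v_nonroot; have [w /andP[w_nonroot w_v] lab_w] := adm.2 v v_nonroot.
apply: (@leq_trans #|[set v; w]|); first by rewrite cards2 eq_sym w_v.
apply/subset_leq_card/subsetP => x /set2P[]->.
  by rewrite !inE v_nonroot eqxx.
by rewrite !inE w_nonroot /edge_labels lab_w eqxx.
Qed.

Lemma label_pairs_sub : label_pair @: nonroot_labels \subset edge_labels @: edges.
Proof.
apply/subsetP => _ /imsetP[l Ll ->]; rewrite -edge_labels_first_vertex //.
by rewrite imset_f // inE first_vertex_nonroot.
Qed.

Lemma extremal_edge_classes : #|edges| = #|nonroot_labels| * 2 ->
  {in edges, forall v, exists2 l, l \in nonroot_labels & edge_labels v = label_pair l}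
  /\ {in edges, forall v, #|[set w in edges | edge_labels w == edge_labels v]| = 2}.
Proof.
move=> card_edges.
have [le_pairs_edges eq_pairs_edges] := leqif_double_card_imset two_le_card_edge_class.
have le_labels_pairs : #|nonroot_labels| <= #|edge_labels @: edges|.
  by rewrite -(card_in_imset label_pair_inj) subset_leq_card ?label_pairs_sub.
have card_pairs : #|edge_labels @: edges| = #|nonroot_labels| by lia.
split=> [v v_edge | v v_edge].
  have pairs_eq : label_pair @: nonroot_labels = edge_labels @: edges.
    apply/eqP; rewrite eqEcard label_pairs_sub.
    by rewrite (card_in_imset label_pair_inj) card_pairs leqnn.
  have /imsetP[l Ll ->] : edge_labels v \in label_pair @: nonroot_labels.
    by rewrite pairs_eq imset_f.
  by exists l.
apply/eqP; move: v v_edge; apply/forall_inP.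
by rewrite -eq_pairs_edges card_edges card_pairs.
Qed.

Section Extremal.

Hypothesis extremal : #|edges| = #|nonroot_labels| * 2.

Lemma extremal_edge_orientation v :
  v != root -> lab v \in nonroot_labels /\ lab (par v) = pred_label (lab v).
Proof.
move: v; apply: tree_ind => [|v v_nonroot IH _]; first by rewrite eqxx.
have v_edge : v \in edges by rewrite inE.
have [l Ll] := (extremal_edge_classes extremal).1 v v_edge.
case/set2_eq => [[-> ->] // | [lab_pv lab_v]].
(* A reversed edge would give [v] the label of its grandparent, against (i). *)
have pv_nonroot : par v != root.
  by apply: contraTneq Ll => pv_root; rewrite -lab_pv pv_root setD11.
have [_ lab_ppv] := IH pv_nonroot.
by have := adm.1 v v_nonroot pv_nonroot; rewrite lab_ppv lab_pv lab_v eqxx.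
Qed.

Lemma extremal_lab_nonroot v : v != root -> lab v != lab root.
Proof. by case/extremal_edge_orientation => /setD1P[]. Qed.

Lemma extremal_depth v : depth v = label_depth (lab v).
Proof.
move: v; apply: tree_ind => [|v v_nonroot IH]; first by rewrite label_depth_root tree.1.
have [Lv lab_pv] := extremal_edge_orientation v_nonroot.
apply/eqP; rewrite eqn_leq label_depth_min andbT tree.2 // IH lab_pv.
exact: label_depth_pred_lt.
Qed.

Lemma extremal_label_class v : v != root ->
  [set w | lab w == lab v] = [set w in edges | edge_labels w == edge_labels v].
Proof.
move=> v_nonroot; have [Lv lab_pv] := extremal_edge_orientation v_nonroot.
apply/setP => w; rewrite !inE; apply/idP/idP => [/eqP lab_wv | /andP[w_nonroot /eqP]].
  have w_nonroot : w != root.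
    by apply: contraTneq Lv => w_root; rewrite -lab_wv w_root setD11.
  have [_ lab_pw] := extremal_edge_orientation w_nonroot.
  by rewrite w_nonroot /edge_labels lab_pw lab_pv lab_wv eqxx.
have [Lw lab_pw] := extremal_edge_orientation w_nonroot.
by rewrite /edge_labels lab_pw lab_pv => /label_pair_inj ->.
Qed.

Lemma extremal_card_label_class v : v != root -> #|[set w | lab w == lab v]| = 2.
Proof.
move=> v_nonroot; rewrite extremal_label_class //.
by apply: (extremal_edge_classes extremal).2; rewrite inE.
Qed.

Lemma extremal_same_label v w : v != w -> lab v = lab w ->
  depth v = depth w /\ lab (par v) = lab (par w).
Proof.
move=> v_w lab_vw; split; first by rewrite !extremal_depth lab_vw.
have nonroot u u' : u != u' -> lab u = lab u' -> u != root.
  move=> u_u' lab_uu'; apply/eqP => u_root.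
  have u'_nonroot : u' != root by rewrite -u_root eq_sym.
  by move/eqP: (extremal_lab_nonroot u'_nonroot); rewrite -lab_uu' u_root.
have [_ ->] := extremal_edge_orientation (nonroot _ _ v_w lab_vw).
have w_v : w != v by rewrite eq_sym.
have [_ ->] := extremal_edge_orientation (nonroot _ _ w_v (esym lab_vw)).
by rewrite lab_vw.
Qed.

End Extremal.

Lemma card_edges_label_classes :
  (forall v, v != root -> lab v != lab root) ->
  (forall v, v != root -> #|[set w | lab w == lab v]| = 2) ->
  #|edges| = #|nonroot_labels| * 2.
Proof.
move=> lab_nonroot card_class.
have card_fiber v : v \in edges -> #|[set w in edges | lab w == lab v]| = 2.
  rewrite inE => v_nonroot; rewrite -(card_class v v_nonroot); apply: eq_card => w.
  rewrite !inE andb_idl // => /eqP lab_wv; apply: contraNneq (lab_nonroot v v_nonroot).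
  by rewrite -lab_wv => ->.
have labels_eq : lab @: edges = nonroot_labels.
  apply/setP => l; apply/imsetP/setD1P => [[v] | [l_nonroot /imsetP[v _ l_v]]].
    by rewrite inE => v_nonroot ->; split; [exact: lab_nonroot | exact: imset_f].
  exists v => //; rewrite inE.
  by apply: contra_neq l_nonroot => v_root; rewrite l_v v_root.
have fiber_ge2 v : v \in edges -> 2 <= #|[set w in edges | lab w == lab v]|.
  by move/card_fiber ->.
have [_ eq_case] := leqif_double_card_imset fiber_ge2.
rewrite -labels_eq; apply/esym/eqP; rewrite eq_case.
by apply/forall_inP => v /card_fiber ->.
Qed.

End AdmissibleTree.

Lemma Delta_eq0 (T : finType) (N : nat) (root : T) (lab : T -> 'I_N) :
  Delta root lab = 0%R <-> #|edges root| = #|nonroot_labels root lab| * 2.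
Proof.
have nV_eq : ((nV lab)%:R = #|nonroot_labels root lab|%:R + 1 :> rat)%R.
  by rewrite /nV (cardsD1 (lab root)) imset_f // add1n -natr1.
rewrite /Delta /nE -/(edges root) nV_eq; split => [Delta0 | ->].
  by apply/eqP; rewrite -(eqr_nat rat) natrM; apply/eqP; lra.
by rewrite natrM; lra.
Qed.

Lemma Delta_eq0_structure (T : finType) (N : nat) (root : T) (par : T -> T)
    (depth : T -> nat) (lab : T -> 'I_N) :
  rooted_tree root par depth -> admissible root par lab ->
  Delta root lab = 0%R <->
    [/\ (forall v, v != root -> lab v != lab root),
        (forall v, v != root -> #|[set w | lab w == lab v]| = 2) &
        (forall v w, v != w -> lab v = lab w ->
           depth v = depth w /\ lab (par v) = lab (par w))].
Proof.
move=> tree adm; rewrite Delta_eq0.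
split=> [extremal | [lab_nonroot card_class _]]; last exact: card_edges_label_classes.
split; [exact: extremal_lab_nonroot tree adm extremal
       | exact: extremal_card_label_class tree adm extremal
       | exact: extremal_same_label tree adm extremal].
Qed.

Lemma partner_label_pairing (T : finType) (N : nat) (root : T) (par : T -> T)
    (depth : T -> nat) (lab : T -> 'I_N) :
  (forall v, v != root -> lab v != lab root) ->
  (forall v, v != root -> #|[set w | lab w == lab v]| = 2) ->
  (forall v w, v != w -> lab v = lab w ->
     depth v = depth w /\ lab (par v) = lab (par w)) ->
  forall v, v != root ->
    [/\ partner lab v != root, partner lab v != v & partner lab (partner lab v) = v] /\
    [/\ depth (partner lab v) = depth v, lab (partner lab v) = lab v
       & lab (par (partner lab v)) = lab (par v)].
Proof.
move=> lab_nonroot card_class same_label v v_nonroot.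
have [pv_v _] := partnerP (card_class v v_nonroot).
have [depth_pv lab_ppv] := same_label _ _ pv_v (partner_eq lab v).
split; split=> //; rewrite ?partner_eq ?partnerK ?card_class //.
apply: contraTneq (lab_nonroot v v_nonroot) => pv_root.
by rewrite -(partner_eq lab v) pv_root eqxx.
Qed.

Local Open Scope ring_scope.

Theorem lemma2p14 (T : finType) (N : nat) (root : T) (par : T -> T)
    (depth : T -> nat) (lab : T -> 'I_N) :
  rooted_tree root par depth ->
  admissible root par lab ->
  (Delta root lab = 0 <->
     [/\ (forall v, v != root -> lab v != lab root),
         (forall v, v != root -> #|[set w | lab w == lab v]| = 2%N) &
         (forall v w, v != w -> lab v = lab w ->
            depth v = depth w /\ lab (par v) = lab (par w))])
  /\
  (Delta root lab = 0 ->
     exists sigma : T -> T, forall v, v != root ->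
       [/\ sigma v != root, sigma v != v & sigma (sigma v) = v] /\
       [/\ depth (sigma v) = depth v, lab (sigma v) = lab v
          & lab (par (sigma v)) = lab (par v)]).
Proof.
move=> tree adm; have structure := Delta_eq0_structure tree adm.
split=> // /structure[lab_nonroot card_class same_label].
by exists (partner lab); apply: partner_label_pairing.
Qed.
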